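(* Let $H$ be a finite-dimensional Hopf algebra over a field $k$, $R\subseteq H$ a Hopf subalgebra, $Q=H/R^+H$, and for $n\ge0$ let $E_n=\mathrm{End}(Q^{\otimes n})_H$, acting on $Q^{\otimes(n+m)}$ (for $m\ge0$) by $\alpha\mapsto\alpha\otimes\mathrm{id}_Q^{\otimes m}$, making $Q^{\otimes(n+m)}$ an $E_n$-$H$-bimodule. Then for every $n\in\mathbb{N}$, $Q^{\otimes(n+1)}$ is isomorphic to a direct summand of $Q^{\otimes(n+2)}$ as $E_n$-$H$-bimodules. Consequently $Q^{\otimes(n+1)}$ is isomorphic to a direct summand of $Q^{\otimes(n+m)}$ as $E_n$-$H$-bimodules for any $m\ge n+1\ge 2$. If moreover $H$ is a semisimple extension of $R$, then $Q^{\otimes n}$ is isomorphic to a direct summand of $Q^{\otimes(n+m)}$ as $E_n$-$H$-bimodules for any $m\ge n\ge0$.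
   Context: $R^+=\ker\varepsilon\cap R$; $Q=H/R^+H$ is a right $H$-module coalgebra with coproduct $\overline{h}\mapsto\overline{h_{(1)}}\otimes\overline{h_{(2)}}$ and counit $\overline{h}\mapsto\varepsilon(h)$. $Q^{\otimes n}$ is the $n$-fold tensor power in mod-$H$ (tensor over $k$, diagonal $H$-action), $Q^{\otimes 0}=k$ with trivial action. $H$ is a (right) semisimple extension of $R$ if every short exact sequence of right $H$-modules which splits as a sequence of $R$-modules splits as $H$-modules; for Hopf subalgebra pairs this is equivalent to the existence of $t\in Q$ with $th=\varepsilon(h)t$ for all $h\in H$ and $\varepsilon_Q(t)=1$. *)

(* Finite-dimensional Hopf algebras, presented by structure
   constants with respect to a basis indexed by a finite type.  Vectors of a
   space with basis B are {ffun B -> k}; linear maps are given by their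
   "matrices" f : B1 -> B2 -> k, where f a b is the coefficient of e_b in the
   image f(e_a).  Composition [lcomp f g] means "first f, then g". *)
From HB Require Import structures.
From mathcomp Require Import all_boot all_algebra.
Set Implicit Arguments.
Unset Strict Implicit.
Unset Printing Implicit Defensive.
Import GRing.Theory.
Local Open Scope ring_scope.

Section LinAlg.
Variable k : fieldType.

Definition lmap (A B : finType) := A -> B -> k.
Definition lcomp (A B C : finType) (f : lmap A B) (g : lmap B C) : lmap A C :=
  fun a c => \sum_(b : B) f a b * g b c.
Definition lid (A : finType) : lmap A A := fun a b => (a == b)%:R.
Definition lmap_eq (A B : finType) (f g : lmap A B) := forall a b, f a b = g a b.
Definition lapply (A B : finType) (v : {ffun A -> k}) (f : lmap A B) : {ffun B -> k} :=
  [ffun b => \sum_(a : A) v a * f a b].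
Definition bvec (A : finType) (a : A) : {ffun A -> k} := [ffun b => (a == b)%:R].
Definition tensv (A B : finType) (u : {ffun A -> k}) (v : {ffun B -> k})
  : {ffun A * B -> k} := [ffun ab => u ab.1 * v ab.2].
End LinAlg.

(* Structure constants of a (candidate) Hopf algebra with basis (e_i)_{i : I}:
   e_i e_j = sum_l mu i j l e_l,  1 = sum_l eta l e_l,
   Delta e_i = sum_{j,l} delta i j l e_j (x) e_l,  eps e_i = eps i,
   S e_i = sum_j ant i j e_j. *)
Record hopf_struct (k : fieldType) (I : finType) := HopfStruct {
  hmu : I -> I -> I -> k;
  heta : I -> k;
  hdelta : I -> I -> I -> k;
  heps : I -> k;
  hant : I -> I -> k
}.

Section Hopf.
Variables (k : fieldType) (I : finType) (H : hopf_struct k I).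

Local Notation mu := (hmu H).
Local Notation eta := (heta H).
Local Notation delta := (hdelta H).
Local Notation eps := (heps H).
Local Notation ant := (hant H).

Record is_hopf : Prop := IsHopf {
  hopf_assoc : forall i j l o,
    \sum_p mu i j p * mu p l o = \sum_p mu j l p * mu i p o;
  hopf_unitl : forall i o, \sum_p eta p * mu p i o = (i == o)%:R;
  hopf_unitr : forall i o, \sum_p eta p * mu i p o = (i == o)%:R;
  hopf_coassoc : forall i a b c,
    \sum_p delta i p c * delta p a b = \sum_p delta i a p * delta p b c;
  hopf_counitl : forall i b, \sum_p eps p * delta i p b = (i == b)%:R;
  hopf_counitr : forall i b, \sum_p eps p * delta i b p = (i == b)%:R;
  hopf_comul_mul : forall i j a b,
    \sum_p mu i j p * delta p a b =
    \sum_a1 \sum_b1 \sum_a2 \sum_b2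
       delta i a1 b1 * delta j a2 b2 * mu a1 a2 a * mu b1 b2 b;
  hopf_comul_unit : forall a b, \sum_p eta p * delta p a b = eta a * eta b;
  hopf_counit_mul : forall i j, \sum_p mu i j p * eps p = eps i * eps j;
  hopf_counit_unit : \sum_p eta p * eps p = 1;
  hopf_antipodel : forall i o,
    \sum_a \sum_b delta i a b * (\sum_c ant a c * mu c b o) = eps i * eta o;
  hopf_antipoder : forall i o,
    \sum_a \sum_b delta i a b * (\sum_c ant b c * mu a c o) = eps i * eta o
}.

Definition hmulv (x y : {ffun I -> k}) : {ffun I -> k} :=
  [ffun l => \sum_i \sum_j x i * y j * mu i j l].
Definition honev : {ffun I -> k} := [ffun l => eta l].
Definition hcomulv (x : {ffun I -> k}) : {ffun I * I -> k} :=
  [ffun jl => \sum_i x i * delta i jl.1 jl.2].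
Definition hcounitv (x : {ffun I -> k}) : k := \sum_i x i * eps i.
Definition hantv (x : {ffun I -> k}) : {ffun I -> k} :=
  [ffun j => \sum_i x i * ant i j].

Definition hopf_subalg (R : {ffun I -> k} -> Prop) : Prop :=
  [/\ R 0 /\
      (forall (a : k) x y, R x -> R y -> R [ffun i => a * x i + y i]),
      R honev,
      (forall x y, R x -> R y -> R (hmulv x y)),
      (forall x, R x -> exists s : seq ({ffun I -> k} * {ffun I -> k}),
          (forall p, p \in s -> R p.1 /\ R p.2) /\
          hcomulv x = \sum_(p <- s) tensv p.1 p.2) &
      (forall x, R x -> R (hantv x))].

Definition Rplus (R : {ffun I -> k} -> Prop) (x : {ffun I -> k}) : Prop :=
  R x /\ hcounitv x = 0.
Definition in_RplusH (R : {ffun I -> k} -> Prop) (x : {ffun I -> k}) : Prop :=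
  exists s : seq ({ffun I -> k} * {ffun I -> k}),
    (forall p, p \in s -> Rplus R p.1) /\ x = \sum_(p <- s) hmulv p.1 p.2.

(* (J, pi, rhoQ) is a model of Q = H / R^+H with its right H-module structure:
   pi : H -> Q is linear and surjective with kernel R^+H, and rhoQ i is the
   action of e_i on Q, i.e. pi (x e_i) = pi(x) . e_i. *)
Definition is_quotient_RplusH (R : {ffun I -> k} -> Prop) (J : finType)
  (pi : lmap k I J) (rhoQ : I -> lmap k J J) : Prop :=
  [/\ (forall w : {ffun J -> k}, exists h, lapply h pi = w),
      (forall h, lapply h pi = 0 <-> in_RplusH R h) &
      (forall h i, lapply (hmulv h (bvec k i)) pi = lapply (lapply h pi) (rhoQ i))].

Definition is_rmodule (A : finType) (rho : I -> lmap k A A) : Prop :=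
  (forall i j, lmap_eq (lcomp (rho i) (rho j)) (fun a b => \sum_l mu i j l * rho l a b))
  /\ lmap_eq (fun a b => \sum_l eta l * rho l a b) (@lid k A).

Definition ract (A : finType) (rho : I -> lmap k A A) (x : {ffun I -> k}) : lmap k A A :=
  fun a b => \sum_i x i * rho i a b.

Definition H_linear (A B : finType) (rhoA : I -> lmap k A A) (rhoB : I -> lmap k B B)
  (f : lmap k A B) : Prop :=
  forall i, lmap_eq (lcomp (rhoA i) f) (lcomp f (rhoB i)).

Definition R_linear (R : {ffun I -> k} -> Prop) (A B : finType)
  (rhoA : I -> lmap k A A) (rhoB : I -> lmap k B B) (f : lmap k A B) : Prop :=
  forall x, R x -> lmap_eq (lcomp (ract rhoA x) f) (lcomp f (ract rhoB x)).

(* H is a (right) semisimple extension of R: every short exact sequence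
   0 -> A -> B -> C -> 0 of (finite-dimensional) right H-modules which splits
   as a sequence of R-modules splits as a sequence of H-modules. *)
Definition semisimple_ext (R : {ffun I -> k} -> Prop) : Prop :=
  forall (A B C : finType) (rhoA : I -> lmap k A A) (rhoB : I -> lmap k B B)
         (rhoC : I -> lmap k C C) (f : lmap k A B) (g : lmap k B C),
    is_rmodule rhoA -> is_rmodule rhoB -> is_rmodule rhoC ->
    H_linear rhoA rhoB f -> H_linear rhoB rhoC g ->
    (forall v, lapply v f = 0 -> v = 0) ->
    (forall w, exists v, lapply v g = w) ->
    (forall v, lapply v g = 0 <-> exists u, lapply u f = v) ->
    (exists s, R_linear R rhoC rhoB s /\ lmap_eq (lcomp s g) (@lid k C)) ->
    (exists s, H_linear rhoC rhoB s /\ lmap_eq (lcomp s g) (@lid k C)).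

Unset Implicit Arguments.

Section TensorPowers.
Variables (J : finType) (rhoQ : I -> lmap k J J).

(* basis of Q^{(x) n}: e_f = e_{f 0} (x) ... (x) e_{f (n-1)} *)
Definition tbasis (n : nat) : finType := {ffun 'I_n -> J}.

(* coefficients of the iterated coproduct Delta^{(n)} : H -> H^{(x) n},
   Delta^{(0)} = eps, Delta^{(n+1)} = (Delta^{(n)} (x) id) o Delta *)
Fixpoint itcomul (n : nat) : I -> {ffun 'I_n -> I} -> k :=
  match n return I -> {ffun 'I_n -> I} -> k with
  | 0 => fun i _ => eps i
  | n'.+1 => fun i c =>
      \sum_p delta i p (c ord_max) *
             itcomul n' p [ffun t : 'I_n' => c (widen_ord (leqnSn n') t)]
  end.

Definition tact (n : nat) (i : I) : lmap k (tbasis n) (tbasis n) :=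
  fun f g => \sum_(c : {ffun 'I_n -> I}) itcomul n i c *
               \prod_(t < n) rhoQ (c t) (f t) (g t).

Definition in_End (n : nat) (alpha : lmap k (tbasis n) (tbasis n)) : Prop :=
  H_linear (tact n) (tact n) alpha.

Definition tfst n m (f : tbasis (n + m)) : tbasis n := [ffun t => f (lshift m t)].
Definition tsnd n m (f : tbasis (n + m)) : tbasis m := [ffun t => f (rshift n t)].
Definition ext n m (alpha : lmap k (tbasis n) (tbasis n))
  : lmap k (tbasis (n + m)) (tbasis (n + m)) :=
  fun f g => alpha (tfst n m f) (tfst n m g) * (tsnd n m f == tsnd n m g)%:R.

Definition bimod_hom n a b (phi : lmap k (tbasis (n + a)) (tbasis (n + b))) : Prop :=
  H_linear (tact (n + a)) (tact (n + b)) phi /\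
  forall alpha, in_End n alpha ->
    lmap_eq (lcomp (ext n a alpha) phi) (lcomp phi (ext n b alpha)).

Definition bimod_summand n a b : Prop :=
  exists (iota : lmap k (tbasis (n + a)) (tbasis (n + b)))
         (p : lmap k (tbasis (n + b)) (tbasis (n + a))),
    [/\ bimod_hom n a b iota, bimod_hom n b a p & lmap_eq (lcomp iota p) (@lid k _)].
End TensorPowers.
End Hopf.

Arguments itcomul {k I} H n i c.
Arguments tact {k I} H {J} rhoQ n i f g.
Arguments in_End {k I} H {J} rhoQ n alpha.
Arguments ext {k J} n m alpha f g.
Arguments bimod_hom {k I} H {J} rhoQ n a b phi.
Arguments bimod_summand {k I} H {J} rhoQ n a b.

(* Q = H/R^+H is a right H-module coalgebra: the maps (pi (x) pi) o Delta and eps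
   vanish on R^+H, so Delta and eps descend to H-linear maps Delta_Q : Q -> Q (x) Q and
   eps_Q : Q -> k.  Thus Delta_Q is an H-linear split monomorphism with retraction
   id (x) eps_Q.  Tensoring on the left with id of Q^(x)n turns an H-split monomorphism
   Q^(x)a -> Q^(x)b into a split monomorphism of E_n-H-bimodules, since id (x) phi
   commutes with alpha (x) id; iterating Q^(x)p -> Q^(x)(p+1) gives the first two claims.
   If H is a semisimple extension of R, the H-epimorphism eps_Q splits R-linearly by
   1 |-> pi(1), hence H-linearly, so k = Q^(x)0 is an H-summand of Q and the same
   iteration applies. *)
From Pilot Require Import Defs.
From mathcomp Require Import all_boot all_algebra.
From mathcomp Require Import ring.
From Stdlib Require Import FunctionalExtensionality.
Set Implicit Arguments. Unset Strict Implicit. Unset Printing Implicit Defensive.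
Import GRing.Theory.
Local Open Scope ring_scope.
Arguments tact {k I} H {J} rhoQ n%_nat_scope i f g.

Section LinearMaps.
Variable k : fieldType.

Lemma sum_kronl (T : finType) (a : T) (F : T -> k) : \sum_b (a == b)%:R * F b = F a.
Proof.
rewrite (bigD1 a) //= eqxx mul1r big1 ?addr0 // => b /negbTE.
by rewrite eq_sym => ->; rewrite mul0r.
Qed.

Lemma sum_kronr (T : finType) (a : T) (F : T -> k) : \sum_b F b * (b == a)%:R = F a.
Proof. by rewrite -[RHS](sum_kronl a); apply: eq_bigr => b _; rewrite mulrC eq_sym. Qed.

Lemma lmap_ext (A B : finType) (f g : lmap k A B) : lmap_eq f g -> f = g.
Proof. by move=> fg; do 2![apply: functional_extensionality => ?]; apply: fg. Qed.

Lemma lcompA (A B C D : finType) (f : lmap k A B) (g : lmap k B C) (h : lmap k C D) :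
  lcomp (lcomp f g) h = lcomp f (lcomp g h).
Proof.
apply: lmap_ext => a d; rewrite /lcomp.
under eq_bigr => c _ do rewrite big_distrl /=.
rewrite exchange_big; apply: eq_bigr => b _; rewrite big_distrr /=.
by apply: eq_bigr => c _; rewrite mulrA.
Qed.

Lemma lcomp1l (A B : finType) (f : lmap k A B) : lcomp (@lid k A) f = f.
Proof. by apply: lmap_ext => a b; apply: sum_kronl. Qed.

Lemma lcomp1r (A B : finType) (f : lmap k A B) : lcomp f (@lid k B) = f.
Proof. by apply: lmap_ext => a b; apply: sum_kronr. Qed.

Lemma lapplyE (A B : finType) (v : {ffun A -> k}) (f : lmap k A B) b :
  lapply v f b = \sum_a v a * f a b.
Proof. by rewrite ffunE. Qed.

Lemma lapply_lcomp (A B C : finType) (v : {ffun A -> k}) (f : lmap k A B) (g : lmap k B C) :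
  lapply (lapply v f) g = lapply v (lcomp f g).
Proof.
apply/ffunP => c; rewrite !lapplyE /lcomp.
under eq_bigr => b _ do rewrite lapplyE big_distrl /=.
rewrite exchange_big; apply: eq_bigr => a _; rewrite big_distrr.
by apply: eq_bigr => b _; rewrite /= mulrA.
Qed.

Lemma lapply_lid (A : finType) (v : {ffun A -> k}) : lapply v (@lid k A) = v.
Proof. by apply/ffunP => a; rewrite lapplyE; apply: sum_kronr. Qed.

Lemma lapply0 (A B : finType) (f : lmap k A B) : lapply 0 f = 0.
Proof. by apply/ffunP => b; rewrite !ffunE big1 // => a _; rewrite ffunE mul0r. Qed.

Lemma sum_bvec (A : finType) (a : A) (F : A -> k) : \sum_b bvec k a b * F b = F a.
Proof. by rewrite -[RHS](sum_kronl a); apply: eq_bigr => b _; rewrite ffunE. Qed.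

Lemma lapply_bvec (A B : finType) (a : A) (f : lmap k A B) b : lapply (bvec k a) f b = f a b.
Proof. by rewrite lapplyE sum_bvec. Qed.

Lemma exchange_big2 (A B C D : finType) (F : A -> B -> C -> D -> k) :
  \sum_a \sum_b \sum_c \sum_d F a b c d = \sum_c \sum_d \sum_a \sum_b F a b c d.
Proof.
under eq_bigr => a _ do rewrite exchange_big /=.
rewrite exchange_big; apply: eq_bigr => c _ /=.
under eq_bigr => a _ do rewrite exchange_big /=.
by rewrite exchange_big.
Qed.

Lemma lcomp_suml (A B C X : finType) (c : X -> k) (F : X -> lmap k A B) (G : lmap k B C) a d :
  lcomp (fun a b => \sum_x c x * F x a b) G a d = \sum_x c x * lcomp (F x) G a d.
Proof.
rewrite /lcomp; under eq_bigr => b _ do rewrite big_distrl /=.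
rewrite exchange_big; apply: eq_bigr => x _ /=.
by rewrite big_distrr; apply: eq_bigr => b _ /=; rewrite mulrA.
Qed.

Lemma lcomp_sumr (A B C X : finType) (c : X -> k) (F : lmap k A B) (G : X -> lmap k B C) a d :
  lcomp F (fun b d => \sum_x c x * G x b d) a d = \sum_x c x * lcomp F (G x) a d.
Proof.
rewrite /lcomp; under eq_bigr => b _ do rewrite big_distrr /=.
rewrite exchange_big; apply: eq_bigr => x _ /=.
by rewrite big_distrr; apply: eq_bigr => b _ /=; ring.
Qed.

Lemma big_distrr4 (A B C D : finType) (x : k) (F : A -> B -> C -> D -> k) :
  x * (\sum_a \sum_b \sum_c \sum_d F a b c d) = \sum_a \sum_b \sum_c \sum_d x * F a b c d.
Proof.
rewrite big_distrr; apply: eq_bigr => a _; rewrite big_distrr; apply: eq_bigr => b _.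
by rewrite big_distrr; apply: eq_bigr => c _; rewrite big_distrr.
Qed.

Lemma big_distrl4 (A B C D : finType) (x : k) (F : A -> B -> C -> D -> k) :
  (\sum_a \sum_b \sum_c \sum_d F a b c d) * x = \sum_a \sum_b \sum_c \sum_d F a b c d * x.
Proof.
rewrite big_distrl; apply: eq_bigr => a _; rewrite big_distrl; apply: eq_bigr => b _.
by rewrite big_distrl; apply: eq_bigr => c _; rewrite big_distrl.
Qed.

End LinearMaps.

Section Summands.
Variables (k : fieldType) (I : finType).

Lemma H_linear_comp (A B C : finType) (rA : I -> lmap k A A) (rB : I -> lmap k B B)
    (rC : I -> lmap k C C) (f : lmap k A B) (g : lmap k B C) :
  H_linear rA rB f -> H_linear rB rC g -> H_linear rA rC (lcomp f g).
Proof.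
move=> Hf Hg i a c.
by rewrite -lcompA (lmap_ext (Hf i)) lcompA (lmap_ext (Hg i)) lcompA.
Qed.

Definition H_summand (A B : finType) (rA : I -> lmap k A A) (rB : I -> lmap k B B) :=
  exists (f : lmap k A B) (g : lmap k B A),
    [/\ H_linear rA rB f, H_linear rB rA g & lcomp f g = @lid k A].

Lemma H_summand_refl (A : finType) (rA : I -> lmap k A A) : H_summand rA rA.
Proof. by exists (@lid k A), (@lid k A); split=> [i a b|i a b|]; rewrite lcomp1l ?lcomp1r. Qed.

Lemma H_summand_trans (A B C : finType) (rA : I -> lmap k A A) (rB : I -> lmap k B B)
    (rC : I -> lmap k C C) :
  H_summand rA rB -> H_summand rB rC -> H_summand rA rC.
Proof.
case=> f [g [Hf Hg fg]] [f' [g' [Hf' Hg' fg']]].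
exists (lcomp f f'), (lcomp g' g); split; try exact: H_linear_comp.
by rewrite lcompA -(lcompA f') fg' lcomp1l fg.
Qed.

End Summands.

Section RankOneQuotient.
Variables (k : fieldType) (I : finType) (H : hopf_struct k I) (R : {ffun I -> k} -> Prop).
Variables (B C : finType) (rB : I -> lmap k B B) (rC : I -> lmap k C C) (g : lmap k B C).
Variables (b0 : B) (c0 : C).
Hypotheses (C_line : forall c, c = c0) (rB_mod : is_rmodule H rB) (rC_mod : is_rmodule H rC).
Hypotheses (gH : H_linear rB rC g) (g_neq0 : g b0 c0 != 0).

(* ker g has the basis e_a - (g e_a / g e_b0) e_b0, for a <> b0. *)
Definition ker_basis := {b : B | b != b0}.
Definition ker_incl : lmap k ker_basis B :=
  fun a b => (val a == b)%:R - g (val a) c0 / g b0 c0 * (b == b0)%:R.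
Definition ker_proj : lmap k B ker_basis := fun b a => (b == val a)%:R.
Definition ker_act i : lmap k ker_basis ker_basis := lcomp ker_incl (lcomp (rB i) ker_proj).

Lemma ker_incl_proj : lcomp ker_incl ker_proj = @lid k ker_basis.
Proof.
apply: lmap_ext => a a'; rewrite /lcomp /ker_proj sum_kronr /ker_incl.
by have /negbTE -> := valP a'; rewrite mulr0 subr0.
Qed.

Lemma ker_proj_incl b b' :
  lcomp ker_proj ker_incl b b' = (b == b')%:R - g b c0 / g b0 c0 * (b' == b0)%:R.
Proof.
rewrite /lcomp /ker_proj /ker_incl; have [->|nb] := eqVneq b b0.
  rewrite big1 => [|a _]; last by rewrite eq_sym (negbTE (valP a)) mul0r.
  by rewrite divff // mul1r eq_sym subrr.
rewrite (bigD1 (exist _ b nb : ker_basis)) //= eqxx mul1r big1 ?addr0 // => a ne.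
suff /negbTE -> : b != val a by rewrite mul0r.
by apply: contra ne => /eqP e; apply/eqP/val_inj; rewrite /= e.
Qed.

Lemma lcomp_ker_proj_incl (Z : finType) (X : lmap k Z B) :
  (forall z c, lcomp X g z c = 0) -> lcomp X (lcomp ker_proj ker_incl) = X.
Proof.
move=> Xg0; apply: lmap_ext => z b'; rewrite /lcomp.
under eq_bigr => b _ do rewrite -/(lcomp _ _ b b') ker_proj_incl mulrBr.
rewrite sumrB sum_kronr.
transitivity (X z b' - (\sum_b X z b * g b c0) / g b0 c0 * (b' == b0)%:R).
  by congr (_ - _); rewrite !big_distrl; apply: eq_bigr => b _ /=; ring.
by have := Xg0 z c0; rewrite /lcomp => ->; rewrite !mul0r subr0.
Qed.

Lemma ker_incl_g : lcomp ker_incl g = fun _ _ => 0.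
Proof.
apply: lmap_ext => a c; rewrite (C_line c) /lcomp /ker_incl; under eq_bigr => b _ do rewrite mulrBl.
rewrite sumrB sum_kronl (eq_bigr (fun b => g (val a) c0 / g b0 c0 * ((b0 == b)%:R * g b c0)));
  last by move=> b _; rewrite eq_sym mulrA.
by rewrite -big_distrr /= sum_kronl mulfVK // subrr.
Qed.

Lemma ker_act_incl i : lcomp (ker_act i) ker_incl = lcomp ker_incl (rB i).
Proof.
rewrite /ker_act !lcompA -lcompA lcomp_ker_proj_incl // => a c.
by rewrite lcompA (lmap_ext (gH i)) -lcompA ker_incl_g /lcomp big1 // => b _; rewrite mul0r.
Qed.

Lemma ker_act_comb (c : I -> k) (M : I -> lmap k B B) a b :
  lcomp ker_incl (lcomp (fun x y => \sum_l c l * M l x y) ker_proj) a b =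
  \sum_l c l * lcomp ker_incl (lcomp (M l) ker_proj) a b.
Proof. by rewrite (lmap_ext (lcomp_suml c M ker_proj)) lcomp_sumr. Qed.

Lemma ker_act_rmodule : is_rmodule H ker_act.
Proof.
have [rB_mul rB_unit] := rB_mod; split=> [i j a b|a b].
  rewrite {2}/ker_act -(lcompA (ker_act i)) ker_act_incl lcompA -(lcompA (rB i)).
  by rewrite (lmap_ext (rB_mul i j)) ker_act_comb.
by rewrite -ker_act_comb (lmap_ext rB_unit) lcomp1l ker_incl_proj.
Qed.

Lemma semisimple_ext_section_line : semisimple_ext H R ->
  (exists s, R_linear R rC rB s /\ lmap_eq (lcomp s g) (@lid k C)) ->
  exists s, H_linear rC rB s /\ lmap_eq (lcomp s g) (@lid k C).
Proof.
move=> ssR Rs.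
have ker_fix v : lapply v g = 0 -> lapply v (lcomp ker_proj ker_incl) = v.
  move=> vg0; apply/ffunP => b'.
  (* [v] seen as a map out of a one-point space *)
  have vg0' (z : 'I_1) c : lcomp (fun _ b => v b) g z c = 0.
    by move/ffunP: vg0 => /(_ c); rewrite !ffunE.
  by have := congr1 (fun F => F ord0 b') (lcomp_ker_proj_incl vg0'); rewrite ffunE.
apply: (ssR _ _ _ ker_act _ _ ker_incl _ ker_act_rmodule rB_mod rC_mod _ gH _ _ _ Rs).
- by move=> i; rewrite ker_act_incl.
- by move=> v v0; rewrite -(lapply_lid v) -ker_incl_proj -lapply_lcomp v0 lapply0.
- move=> w; exists [ffun b => (b == b0)%:R * (w c0 / g b0 c0)].
  apply/ffunP => c; rewrite lapplyE (C_line c).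
  rewrite (eq_bigr (fun b => (b0 == b)%:R * (w c0 / g b0 c0 * g b c0))).
    by rewrite sum_kronl mulfVK.
  by move=> b _; rewrite ffunE eq_sym; ring.
move=> v; split=> [vg0|[u <-]].
  by exists (lapply v ker_proj); rewrite lapply_lcomp ker_fix.
rewrite lapply_lcomp ker_incl_g; apply/ffunP => c; rewrite !ffunE.
by rewrite big1 // => b _; rewrite mulr0.
Qed.

End RankOneQuotient.

Section TensorBasis.
Variables (k : fieldType) (J : finType).

Definition tcat n m (x : tbasis J n) (y : tbasis J m) : tbasis J (n + m) :=
  [ffun t => match split t with inl t1 => x t1 | inr t2 => y t2 end].

Lemma tcat_lshift n m (x : tbasis J n) (y : tbasis J m) t : tcat x y (lshift m t) = x t.
Proof. by rewrite ffunE (unsplitK (inl _ t)). Qed.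

Lemma tcat_rshift n m (x : tbasis J n) (y : tbasis J m) t : tcat x y (rshift n t) = y t.
Proof. by rewrite ffunE (unsplitK (inr _ t)). Qed.

Lemma tfst_cat n m (x : tbasis J n) (y : tbasis J m) : tfst J n m (tcat x y) = x.
Proof. by apply/ffunP => t; rewrite ffunE tcat_lshift. Qed.

Lemma tsnd_cat n m (x : tbasis J n) (y : tbasis J m) : tsnd J n m (tcat x y) = y.
Proof. by apply/ffunP => t; rewrite ffunE tcat_rshift. Qed.

Lemma tcat_split n m (f : tbasis J (n + m)) : tcat (tfst J n m f) (tsnd J n m f) = f.
Proof.
apply/ffunP => t; rewrite ffunE; case: splitP => t' e; rewrite ffunE;
  by congr (f _); apply/val_inj.
Qed.

Lemma tbasis_add_eq n m (f g : tbasis J (n + m)) :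
  (f == g) = (tfst J n m f == tfst J n m g) && (tsnd J n m f == tsnd J n m g).
Proof.
apply/eqP/andP => [-> //|[/eqP e1 /eqP e2]].
by rewrite -(tcat_split f) -(tcat_split g) e1 e2.
Qed.

Lemma sum_tbasis_add n m (F : tbasis J (n + m) -> k) :
  \sum_f F f = \sum_x \sum_y F (tcat x y).
Proof.
rewrite pair_big /=.
have tcat_bij : bijective (fun p : tbasis J n * tbasis J m => tcat p.1 p.2).
  exists (fun f => (tfst J n m f, tsnd J n m f)) => [[x y]|f] /=.
    by rewrite tfst_cat tsnd_cat.
  exact: tcat_split.
by rewrite (reindex _ (onW_bij _ tcat_bij)).
Qed.

Lemma sum_tbasis0 (F : tbasis J 0 -> k) (f0 : tbasis J 0) : \sum_f F f = F f0.
Proof.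
by rewrite (bigD1 f0) //= big1 ?addr0 // => f /eqP []; apply/ffunP => -[].
Qed.

Lemma tbasis0_eq (f g : tbasis J 0) : f = g.
Proof. by apply/ffunP => -[]. Qed.

Definition tb1 (x : J) : tbasis J 1 := [ffun => x].

Lemma tb1K (f : tbasis J 1) : tb1 (f ord0) = f.
Proof. by apply/ffunP => t; rewrite ffunE (ord1 t). Qed.

Lemma tb1_eq (x : J) (f : tbasis J 1) : (tb1 x == f) = (x == f ord0).
Proof. by rewrite -{1}(tb1K f); apply/eqP/eqP => [/ffunP/(_ ord0)|->]; rewrite ?ffunE. Qed.

Lemma sum_tbasis1 (F : tbasis J 1 -> k) : \sum_f F f = \sum_x F (tb1 x).
Proof.
have tb1_bij : bijective tb1 by exists (fun f : tbasis J 1 => f ord0) => [x|f]; rewrite ?ffunE ?tb1K.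
by rewrite (reindex _ (onW_bij _ tb1_bij)).
Qed.

Definition ttens n n' a b (F : lmap k (tbasis J n) (tbasis J n'))
    (G : lmap k (tbasis J a) (tbasis J b)) : lmap k (tbasis J (n + a)) (tbasis J (n' + b)) :=
  fun f g => F (tfst J n a f) (tfst J n' b g) * G (tsnd J n a f) (tsnd J n' b g).

Lemma ttens_comp n n' n'' a b c (F : lmap k (tbasis J n) (tbasis J n'))
    (F' : lmap k (tbasis J n') (tbasis J n'')) (G : lmap k (tbasis J a) (tbasis J b))
    (G' : lmap k (tbasis J b) (tbasis J c)) :
  lcomp (ttens F G) (ttens F' G') = ttens (lcomp F F') (lcomp G G').
Proof.
apply: lmap_ext => f g; rewrite /lcomp /ttens sum_tbasis_add big_distrlr /=.
apply: eq_bigr => x _; apply: eq_bigr => y _.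
by rewrite tfst_cat tsnd_cat; ring.
Qed.

Lemma ttens_lid n a : ttens (@lid k (tbasis J n)) (@lid k (tbasis J a)) = @lid k _.
Proof.
apply: lmap_ext => f g; rewrite /ttens /lid tbasis_add_eq.
by case: eqP; case: eqP; rewrite ?mulr1 ?mulr0.
Qed.

Lemma ext_ttens n m (alpha : lmap k (tbasis J n) (tbasis J n)) :
  ext n m alpha = ttens alpha (@lid k (tbasis J m)).
Proof. by []. Qed.

End TensorBasis.

Section IteratedCoproduct.
Variables (k : fieldType) (I : finType) (H : hopf_struct k I).
Hypothesis HH : is_hopf H.
Local Notation delta := (hdelta H).
Local Notation eps := (heps H).

Lemma comul_counitl i b : \sum_p delta i p b * eps p = (i == b)%:R.
Proof. by rewrite -(hopf_counitl HH i b); apply: eq_bigr => p _; rewrite mulrC. Qed.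

Lemma comul_counitr i b : \sum_p delta i b p * eps p = (i == b)%:R.
Proof. by rewrite -(hopf_counitr HH i b); apply: eq_bigr => p _; rewrite mulrC. Qed.

Lemma itcomulS n i c : itcomul H n.+1 i c =
  \sum_p delta i p (c ord_max) * itcomul H n p [ffun t => c (widen_ord (leqnSn n) t)].
Proof. by []. Qed.

Lemma itcomul_cons n i c : itcomul H n.+1 i c =
  \sum_p delta i (c ord0) p * itcomul H n p [ffun t => c (lift ord0 t)].
Proof.
elim: n i c => [|n IH] i c.
  rewrite itcomulS /= comul_counitl comul_counitr.
  by have -> : (ord_max : 'I_1) = ord0 by apply/val_inj.
rewrite itcomulS.
transitivity (\sum_p \sum_q delta i p (c ord_max) * delta p (c ord0) q *
   itcomul H n q [ffun t => c (lift ord0 (widen_ord (leqnSn n) t))]).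
  apply: eq_bigr => p _; rewrite IH big_distrr; apply: eq_bigr => q _.
  rewrite ffunE /= mulrA; congr (_ * delta _ (c _) _ * itcomul H n q _).
    exact/val_inj.
  by apply/ffunP => t; rewrite !ffunE; congr (c _); apply/val_inj.
rewrite exchange_big /=.
transitivity (\sum_q \sum_p delta i (c ord0) p * delta p q (c ord_max) *
   itcomul H n q [ffun t => c (lift ord0 (widen_ord (leqnSn n) t))]).
  by apply: eq_bigr => q _; rewrite -!big_distrl (hopf_coassoc HH).
rewrite exchange_big; apply: eq_bigr => p _ /=.
rewrite big_distrr; apply: eq_bigr => q _ /=; rewrite !ffunE mulrA.
congr (_ * delta _ _ (c _) * itcomul H n q _); first exact/val_inj.
by apply/ffunP => t; rewrite !ffunE.
Qed.

Lemma coassoc_sum i x (X Y : I -> k) :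
  \sum_p delta i x p * (\sum_a \sum_b delta p a b * X a * Y b) =
  \sum_p \sum_b delta i p b * (\sum_a delta p x a * X a) * Y b.
Proof.
transitivity (\sum_a \sum_b (\sum_p delta i x p * delta p a b) * X a * Y b).
  under eq_bigr => p _ do rewrite big_distrr /=.
  rewrite exchange_big; apply: eq_bigr => a _ /=.
  under eq_bigr => p _ do rewrite big_distrr /=.
  rewrite exchange_big; apply: eq_bigr => b _ /=.
  by rewrite !big_distrl; apply: eq_bigr => p _ /=; ring.
transitivity (\sum_a \sum_b (\sum_p delta i p b * delta p x a) * X a * Y b).
  by apply: eq_bigr => a _; apply: eq_bigr => b _; rewrite (hopf_coassoc HH).
rewrite exchange_big /=.
under eq_bigr => b _ do
  (under eq_bigr => a _ do rewrite !big_distrl /=; rewrite exchange_big /=).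
rewrite exchange_big; apply: eq_bigr => p _; apply: eq_bigr => b _ /=.
by rewrite big_distrr big_distrl; apply: eq_bigr => a _ /=; ring.
Qed.

Lemma itcomul_add n m i (c : {ffun 'I_(n + m) -> I}) : itcomul H (n + m) i c =
  \sum_a \sum_b delta i a b * itcomul H n a (tfst I n m c) * itcomul H m b (tsnd I n m c).
Proof.
elim: n i c => [|n IH] i c.
  rewrite exchange_big /=.
  under eq_bigr => b _ do rewrite -big_distrl /= comul_counitl.
  rewrite sum_kronl; congr (itcomul H m i _).
  by apply/ffunP => t; rewrite ffunE; congr (c _); apply/val_inj.
set c' : {ffun 'I_(n + m) -> I} := [ffun t => c (lift ord0 t)].
have c'_fst : tfst I n m c' = [ffun t => tfst I n.+1 m c (lift ord0 t)].
  by apply/ffunP => t; rewrite !ffunE; congr (c _); apply/val_inj.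
have c'_snd : tsnd I n m c' = tsnd I n.+1 m c.
  by apply/ffunP => t; rewrite !ffunE; congr (c _); apply/val_inj.
have c_0 : tfst I n.+1 m c ord0 = c ord0 by rewrite ffunE; congr (c _); apply/val_inj.
rewrite -[LHS]/(itcomul H (n + m).+1 i c) itcomul_cons -/c'.
under eq_bigr => p _ do rewrite IH c'_fst c'_snd.
rewrite coassoc_sum; apply: eq_bigr => a _; apply: eq_bigr => b _.
by rewrite itcomul_cons c_0.
Qed.

End IteratedCoproduct.

Section TensorAction.
Variables (k : fieldType) (I : finType) (H : hopf_struct k I).
Hypothesis HH : is_hopf H.
Variables (J : finType) (rhoQ : I -> lmap k J J).
Local Notation delta := (hdelta H).
Local Notation eps := (heps H).
Local Notation tact := (tact H rhoQ).

Lemma tact_add n m i (f g : tbasis J (n + m)) :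
  tact (n + m) i f g = \sum_a \sum_b delta i a b * ttens (tact n a) (tact m b) f g.
Proof.
rewrite /Defs.tact /ttens (sum_tbasis_add (J := I)).
under [RHS]eq_bigr => a _ do under eq_bigr => b _ do
  (rewrite big_distrlr big_distrr /=; under eq_bigr => x _ do rewrite big_distrr /=).
rewrite exchange_big2; apply: eq_bigr => x _; apply: eq_bigr => y _.
rewrite (itcomul_add HH) tfst_cat tsnd_cat big_split_ord /= !big_distrl /=.
apply: eq_bigr => a _; rewrite big_distrl /=; apply: eq_bigr => b _.
under eq_bigr => t _ do rewrite tcat_lshift.
rewrite (eq_bigr (fun t : 'I_m => rhoQ (y t) (f (rshift n t)) (g (rshift n t)))) => [|t _];
  last by rewrite tcat_rshift.
rewrite [in RHS](eq_bigr (fun t : 'I_n => rhoQ (x t) (f (lshift m t)) (g (lshift m t)))) => [|t _];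
  last by rewrite !ffunE.
rewrite [in RHS](eq_bigr (fun t : 'I_m => rhoQ (y t) (f (rshift n t)) (g (rshift n t)))) => [|t _];
  last by rewrite !ffunE.
ring.
Qed.

Lemma tact0 i (f g : tbasis J 0) : tact 0 i f g = eps i.
Proof. by rewrite /Defs.tact (sum_tbasis0 _ [ffun => i]) big_ord0 mulr1. Qed.

Lemma tact1 i (f g : tbasis J 1) : tact 1 i f g = rhoQ i (f ord0) (g ord0).
Proof.
rewrite /Defs.tact (sum_tbasis1 (J := I)) -[RHS](sum_kronl i (fun j => rhoQ j _ _)).
by apply: eq_bigr => j _; rewrite itcomulS big_ord1 /tb1 !ffunE comul_counitl.
Qed.

Definition act2 i z w b c := \sum_p \sum_q delta i p q * rhoQ p z b * rhoQ q w c.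

Lemma sum_tbasis2 (F : tbasis J 2 -> k) : \sum_f F f = \sum_x \sum_y F (tcat (tb1 x) (tb1 y)).
Proof.
by rewrite (sum_tbasis_add (n := 1) (m := 1)) sum_tbasis1; apply: eq_bigr => x _; rewrite sum_tbasis1.
Qed.

Lemma tact2_tcat i x y (g : tbasis J 2) : tact 2 i (tcat (tb1 x) (tb1 y)) g =
  act2 i x y (tfst J 1 1 g ord0) (tsnd J 1 1 g ord0).
Proof.
rewrite (tact_add (n := 1) (m := 1)); apply: eq_bigr => p _; apply: eq_bigr => q _.
by rewrite /ttens tfst_cat tsnd_cat !tact1 !ffunE mulrA.
Qed.

Lemma tact0_rmodule : is_rmodule H (tact 0).
Proof.
split=> [i j f g|f g].
  rewrite /lcomp (sum_tbasis0 _ f) !tact0.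
  by under [RHS]eq_bigr => l _ do rewrite tact0; rewrite (hopf_counit_mul HH).
by under eq_bigr => l _ do rewrite tact0; rewrite (hopf_counit_unit HH) /lid (tbasis0_eq f g) eqxx.
Qed.

Lemma tact1_rmodule : is_rmodule H rhoQ -> is_rmodule H (tact 1).
Proof.
case=> rho_mul rho_unit; split=> [i j f g|f g].
  rewrite /lcomp sum_tbasis1; under eq_bigr => x _ do rewrite !tact1 ffunE.
  by under [RHS]eq_bigr => l _ do rewrite tact1; apply: rho_mul.
under eq_bigr => l _ do rewrite tact1.
by rewrite rho_unit /lid -tb1_eq tb1K.
Qed.

Lemma ttens_H_linear n a b (phi : lmap k (tbasis J a) (tbasis J b)) :
  H_linear (tact a) (tact b) phi ->
  H_linear (tact (n + a)) (tact (n + b)) (ttens (@lid k (tbasis J n)) phi).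
Proof.
move=> phiH i f g.
have tactE c d : tact (c + d) i =
    fun f g => \sum_(p : I * I) delta i p.1 p.2 * ttens (tact c p.1) (tact d p.2) f g.
  by apply: lmap_ext => f' g'; rewrite tact_add pair_big.
rewrite !tactE lcomp_suml lcomp_sumr; apply: eq_bigr => p _.
by rewrite !ttens_comp lcomp1l lcomp1r (lmap_ext (phiH p.2)).
Qed.

Lemma bimod_summand_ttens n a b :
  H_summand (tact a) (tact b) -> bimod_summand H rhoQ n a b.
Proof.
case=> phi [psi [phiH psiH phipsi]].
have ext_comm c d (chi : lmap k (tbasis J c) (tbasis J d)) alpha :
    lmap_eq (lcomp (ext n c alpha) (ttens (@lid k _) chi))
            (lcomp (ttens (@lid k _) chi) (ext n d alpha)).
  by move=> f g; rewrite !ext_ttens !ttens_comp !lcomp1l !lcomp1r.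
exists (ttens (@lid k _) phi), (ttens (@lid k _) psi); split.
- by split=> [|alpha _]; [apply: ttens_H_linear | apply: ext_comm].
- by split=> [|alpha _]; [apply: ttens_H_linear | apply: ext_comm].
by move=> f g; rewrite ttens_comp lcomp1l phipsi ttens_lid.
Qed.

Lemma H_summand_tact_ladder a :
  H_summand (tact a) (tact a.+1) -> forall m, (a <= m)%N -> H_summand (tact a) (tact m).
Proof.
move=> step m /subnK <-; elim: (m - a)%N => [|p IH]; first exact: H_summand_refl.
apply: H_summand_trans IH _.
have [phi [psi [[phiH _] [psiH _] phipsi]]] := bimod_summand_ttens p step.
rewrite addSnnS.
by exists phi, psi; split=> //; apply: lmap_ext.
Qed.

End TensorAction.

Section HopfElements.
Variables (k : fieldType) (I : finType) (H : hopf_struct k I).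
Hypothesis HH : is_hopf H.
Local Notation mu := (hmu H).
Local Notation eps := (heps H).
Local Notation hmulv := (hmulv H).

Definition lform (w : I -> k) (h : {ffun I -> k}) := \sum_i h i * w i.

Lemma lformB w x y : lform w (x - y) = lform w x - lform w y.
Proof. by rewrite /lform -sumrB; apply: eq_bigr => i _; rewrite !ffunE mulrBl. Qed.

Lemma lform_sum w (T : Type) (s : seq T) (F : T -> {ffun I -> k}) :
  lform w (\sum_(t <- s) F t) = \sum_(t <- s) lform w (F t).
Proof.
rewrite /lform; under eq_bigr => i _ do rewrite sum_ffunE big_distrl /=.
by rewrite exchange_big.
Qed.

Lemma lform_bvec w i : lform w (bvec k i) = w i.
Proof. exact: sum_bvec. Qed.

Lemma lform_hmulv w u y :
  lform w (hmulv u y) = \sum_a \sum_j u a * y j * \sum_l mu a j l * w l.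
Proof.
rewrite /lform; under eq_bigr => l _ do rewrite ffunE big_distrl /=.
rewrite exchange_big; apply: eq_bigr => a _ /=.
under eq_bigr => l _ do rewrite big_distrl /=.
rewrite exchange_big; apply: eq_bigr => j _ /=.
by rewrite big_distrr; apply: eq_bigr => l _ /=; ring.
Qed.

Lemma hcomulvE u x y : hcomulv H u (x, y) = \sum_a u a * hdelta H a x y.
Proof. by rewrite ffunE. Qed.

Lemma hmulv_bvecl x i l : hmulv (bvec k i) x l = \sum_a x a * mu i a l.
Proof.
rewrite ffunE -[RHS](sum_bvec i (fun j => \sum_a x a * mu j a l)).
by apply: eq_bigr => j _; rewrite big_distrr; apply: eq_bigr => a _ /=; ring.
Qed.

Lemma hmulv_bvecr x i l : hmulv x (bvec k i) l = \sum_a x a * mu a i l.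
Proof.
rewrite ffunE; apply: eq_bigr => a _.
by rewrite -[RHS](sum_bvec i (fun j => x a * mu a j l)); apply: eq_bigr => j _; ring.
Qed.

Lemma hmulv_sumr h x l : hmulv h x l = \sum_i x i * hmulv h (bvec k i) l.
Proof.
rewrite ffunE exchange_big; apply: eq_bigr => j _ /=.
by rewrite hmulv_bvecr big_distrr; apply: eq_bigr => a _ /=; ring.
Qed.

Lemma hmulv_combl a (u v : {ffun I -> k}) x l :
  hmulv [ffun i => a * u i + v i] x l = a * hmulv u x l + hmulv v x l.
Proof.
rewrite !ffunE big_distrr -big_split; apply: eq_bigr => i _ /=.
by rewrite big_distrr -big_split; apply: eq_bigr => j _ /=; rewrite ffunE; ring.
Qed.

Lemma hmul1v x : hmulv (honev H) x = x.
Proof.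
apply/ffunP => l; rewrite ffunE exchange_big /= -[RHS](sum_kronl l x).
apply: eq_bigr => j _; rewrite eq_sym -(hopf_unitl HH j l) big_distrl /=.
by apply: eq_bigr => i _; rewrite ffunE; ring.
Qed.

Lemma hmulv1 x : hmulv x (honev H) = x.
Proof.
apply/ffunP => l; rewrite ffunE -[RHS](sum_kronl l x).
apply: eq_bigr => i _; rewrite eq_sym -(hopf_unitr HH i l) big_distrl /=.
by apply: eq_bigr => j _; rewrite ffunE; ring.
Qed.

Lemma hmulv_bvecA h i j :
  hmulv (hmulv h (bvec k i)) (bvec k j) = hmulv h (hmulv (bvec k i) (bvec k j)).
Proof.
apply/ffunP => o; rewrite hmulv_bvecr hmulv_sumr.
transitivity (\sum_a h a * \sum_p mu i j p * mu a p o).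
  under eq_bigr => p _ do rewrite hmulv_bvecr big_distrl /=.
  rewrite exchange_big; apply: eq_bigr => a _ /=.
  by rewrite -(hopf_assoc HH) big_distrr; apply: eq_bigr => p _ /=; ring.
under eq_bigr => a _ do rewrite big_distrr /=.
rewrite exchange_big; apply: eq_bigr => p _ /=.
by rewrite hmulv_bvecl sum_bvec hmulv_bvecr big_distrr; apply: eq_bigr => a _ /=; ring.
Qed.

Lemma hcounitvM x y : hcounitv H (hmulv x y) = hcounitv H x * hcounitv H y.
Proof.
rewrite [LHS]lform_hmulv /hcounitv big_distrl; apply: eq_bigr => i _ /=.
rewrite big_distrr; apply: eq_bigr => j _ /=.
by rewrite (hopf_counit_mul HH); ring.
Qed.

Lemma hcounitv1 : hcounitv H (honev H) = 1.
Proof. by rewrite -(hopf_counit_unit HH); apply: eq_bigr => i _; rewrite ffunE. Qed.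

Lemma sum_tensv (s : seq ({ffun I -> k} * {ffun I -> k})) (F : I -> I -> k) :
  \sum_x \sum_y (\sum_(p <- s) tensv p.1 p.2) (x, y) * F x y =
  \sum_(p <- s) \sum_x \sum_y p.1 x * p.2 y * F x y.
Proof.
under eq_bigr => x _ do under eq_bigr => y _ do rewrite sum_ffunE big_distrl /=.
under eq_bigr => x _ do rewrite exchange_big /=.
rewrite exchange_big; apply: eq_bigr => p _; apply: eq_bigr => x _; apply: eq_bigr => y _.
by rewrite ffunE.
Qed.

Lemma hcounitv_comul r :
  \sum_x \sum_y hcomulv H r (x, y) * (eps x * eps y) = hcounitv H r.
Proof.
under eq_bigr => x _ do under eq_bigr => y _ do rewrite hcomulvE big_distrl /=.
under eq_bigr => x _ do rewrite exchange_big /=.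
rewrite exchange_big; apply: eq_bigr => a _ /=.
transitivity (r a * \sum_y (\sum_x eps x * hdelta H a x y) * eps y).
  rewrite exchange_big big_distrr; apply: eq_bigr => y _ /=.
  by rewrite !big_distrl big_distrr; apply: eq_bigr => x _ /=; ring.
by under eq_bigr => y _ do rewrite (hopf_counitl HH); rewrite sum_kronl.
Qed.

End HopfElements.

Section QuotientModule.
Variables (k : fieldType) (I : finType) (H : hopf_struct k I).
Hypothesis HH : is_hopf H.
Variables (R : {ffun I -> k} -> Prop) (J : finType) (pi : lmap k I J)
  (rhoQ : I -> lmap k J J).
Hypotheses (HR : hopf_subalg H R) (HQ : is_quotient_RplusH H R pi rhoQ).
Local Notation mu := (hmu H).
Local Notation delta := (hdelta H).
Local Notation eps := (heps H).
Local Notation hmulv := (hmulv H).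

Lemma ract_bvec (A : finType) (rho : I -> lmap k A A) i : ract rho (bvec k i) = rho i.
Proof. by apply: lmap_ext => a b; apply: sum_bvec. Qed.

Lemma pi_hmulv h x : lapply (hmulv h x) pi = lapply (lapply h pi) (ract rhoQ x).
Proof.
have [_ _ piH] := HQ; apply/ffunP => b.
transitivity (\sum_i x i * lapply (hmulv h (bvec k i)) pi b).
  rewrite lapplyE; under eq_bigr => l _ do rewrite hmulv_sumr big_distrl /=.
  rewrite exchange_big; apply: eq_bigr => i _ /=.
  by rewrite lapplyE big_distrr; apply: eq_bigr => l _ /=; ring.
under eq_bigr => i _ do rewrite piH lapplyE big_distrr /=.
rewrite lapplyE exchange_big; apply: eq_bigr => z _ /=.
by rewrite /ract big_distrr; apply: eq_bigr => i _ /=; ring.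
Qed.

Lemma pi_RplusH r x : Rplus H R r -> lapply (hmulv r x) pi = 0.
Proof.
have [_ piK _] := HQ; move=> r_plus; apply/piK.
by exists [:: (r, x)]; split=> [p|]; rewrite ?big_seq1 // inE => /eqP ->.
Qed.

Lemma pi_hmulv_R r x b : R r -> lapply (hmulv r x) pi b = hcounitv H r * lapply x pi b.
Proof.
have [[_ Rlin] R1 _ _ _] := HR; move=> Rr.
(* r - eps(r) 1 lies in R^+, hence pi ((r - eps(r) 1) x) = 0. *)
set r' := [ffun i => - hcounitv H r * honev H i + r i].
have r'_plus : Rplus H R r'.
  split; first exact: Rlin R1 Rr.
  rewrite /hcounitv; under eq_bigr => i _ do rewrite ffunE mulrDl -mulrA.
  by rewrite big_split -big_distrr /= -/(hcounitv H _) hcounitv1 // mulr1 addNr.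
have := congr1 (fun v : {ffun J -> k} => v b) (pi_RplusH x r'_plus).
rewrite /= lapplyE ffunE; under eq_bigr => l _ do rewrite hmulv_combl mulrDl -mulrA.
rewrite big_split -big_distrr /= -!lapplyE hmul1v //.
by move/eqP; rewrite addrC addr_eq0 => /eqP ->; ring.
Qed.

(* The structure maps of Q are computed on chosen preimages [sig j] of its basis
   vectors; they do not depend on the choice, as the functionals involved vanish on R^+H. *)
Variable sig : J -> {ffun I -> k}.
Hypothesis pi_sig : forall j, lapply (sig j) pi = bvec k j.

Lemma lform_factor_pi w :
  (forall r y, Rplus H R r -> lform w (hmulv r y) = 0) ->
  forall h, lform w h = \sum_j lapply h pi j * lform w (sig j).
Proof.
move=> w_van h; have [_ piK _] := HQ.
(* h - S lies in ker pi = R^+H. *)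
set S := \sum_j [ffun i => lapply h pi j * sig j i].
have SE a : S a = \sum_j lapply h pi j * sig j a.
  by rewrite sum_ffunE; apply: eq_bigr => j _; rewrite ffunE.
have : in_RplusH H R (h - S).
  apply/piK; apply/ffunP => b; rewrite !ffunE.
  under eq_bigr => a _ do rewrite !ffunE SE mulrBl big_distrl /=.
  rewrite sumrB -lapplyE exchange_big /=.
  under eq_bigr => j _ do rewrite -(eq_bigr _ (fun a _ => mulrA _ _ _)) -big_distrr /=.
  under eq_bigr => j _ do rewrite -lapplyE pi_sig ffunE.
  rewrite (eq_bigr (fun j => lapply h pi j * (j == b)%:R)) => [|j _]; last by rewrite !ffunE.
  by rewrite sum_kronr subrr.
case=> s [s_plus hS]; have /eqP : lform w (h - S) = 0.
  by rewrite hS lform_sum big_seq big1 // => p /s_plus; apply: w_van.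
rewrite lformB subr_eq0 => /eqP ->.
rewrite /lform; under eq_bigr => i _ do rewrite SE big_distrl /=.
rewrite exchange_big; apply: eq_bigr => j _.
by rewrite big_distrr; apply: eq_bigr => i _ /=; rewrite mulrA.
Qed.

Definition counitQ j := hcounitv H (sig j).

Lemma hcounitv_factor h : hcounitv H h = \sum_j lapply h pi j * counitQ j.
Proof.
apply: (lform_factor_pi (w := eps)) => r y [_ r0].
by rewrite [lform _ _]hcounitvM // r0 mul0r.
Qed.

Lemma pi_sig_hmulv a x b : lapply (hmulv (sig a) x) pi b = ract rhoQ x a b.
Proof. by rewrite pi_hmulv pi_sig lapply_bvec. Qed.

Lemma counitQ_H i a : \sum_b rhoQ i a b * counitQ b = eps i * counitQ a.
Proof.
have := hcounitv_factor (hmulv (sig a) (bvec k i)).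
rewrite hcounitvM // mulrC [hcounitv _ _]lform_bvec => ->.
by apply: eq_bigr => b _; rewrite pi_sig_hmulv ract_bvec.
Qed.

Lemma rhoQ_rmodule : is_rmodule H rhoQ.
Proof.
split=> [i j a b|a b].
  transitivity (ract rhoQ (hmulv (bvec k i) (bvec k j)) a b).
    rewrite -pi_sig_hmulv -hmulv_bvecA // pi_hmulv lapplyE.
    by apply: eq_bigr => z _; rewrite pi_sig_hmulv !ract_bvec.
  by apply: eq_bigr => l _; rewrite hmulv_bvecl sum_bvec.
have := pi_sig_hmulv a (honev H) b.
by rewrite hmulv1 // pi_sig ffunE /lid => ->; apply: eq_bigr => l _; rewrite ffunE.
Qed.

Definition comul_pi b c (i : I) : k := \sum_x \sum_y delta i x y * pi x b * pi y c.
Definition mul_pi a1 a2 b : k := \sum_x mu a1 a2 x * pi x b.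

Lemma mul_pi_rho a1 a2 b : mul_pi a1 a2 b = \sum_z pi a1 z * rhoQ a2 z b.
Proof.
transitivity (lapply (hmulv (bvec k a1) (bvec k a2)) pi b).
  by rewrite lapplyE; apply: eq_bigr => x _; rewrite hmulv_bvecl sum_bvec.
by rewrite pi_hmulv ract_bvec lapplyE; apply: eq_bigr => z _; rewrite lapply_bvec.
Qed.

Lemma mul_pi_R p a2 b : R p -> \sum_a1 p a1 * mul_pi a1 a2 b = hcounitv H p * pi a2 b.
Proof.
move=> Rp; rewrite -(lapply_bvec a2 pi b) -pi_hmulv_R // lapplyE.
under eq_bigr => a1 _ do rewrite /mul_pi big_distrr /=.
rewrite exchange_big; apply: eq_bigr => x _ /=.
by rewrite hmulv_bvecr big_distrl; apply: eq_bigr => a1 _ /=; rewrite mulrA.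
Qed.

Lemma mu_comul_pi a j b c : \sum_l mu a j l * comul_pi b c l =
  \sum_a1 \sum_b1 \sum_a2 \sum_b2
    delta a a1 b1 * delta j a2 b2 * (mul_pi a1 a2 b * mul_pi b1 b2 c).
Proof.
transitivity (\sum_x \sum_y (\sum_l mu a j l * delta l x y) * (pi x b * pi y c)).
  under eq_bigr => l _ do rewrite big_distrr /=.
  rewrite exchange_big; apply: eq_bigr => x _ /=.
  under eq_bigr => l _ do rewrite big_distrr /=.
  rewrite exchange_big; apply: eq_bigr => y _ /=.
  by rewrite big_distrl; apply: eq_bigr => l _ /=; ring.
under eq_bigr => x _ do under eq_bigr => y _ do rewrite (hopf_comul_mul HH) big_distrl4.
rewrite exchange_big2; apply: eq_bigr => a1 _; apply: eq_bigr => b1 _.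
rewrite exchange_big2; apply: eq_bigr => a2 _; apply: eq_bigr => b2 _ /=.
rewrite /mul_pi big_distrlr big_distrr; apply: eq_bigr => x _ /=.
by rewrite big_distrr; apply: eq_bigr => y _ /=; ring.
Qed.

Lemma comul_pi_hmulv u y b c : lform (comul_pi b c) (hmulv u y) =
  \sum_a1 \sum_b1 \sum_a2 \sum_b2
    hcomulv H u (a1, b1) * hcomulv H y (a2, b2) * (mul_pi a1 a2 b * mul_pi b1 b2 c).
Proof.
rewrite lform_hmulv.
under eq_bigr => a _ do under eq_bigr => j _ do rewrite mu_comul_pi big_distrr4.
rewrite exchange_big2; apply: eq_bigr => a1 _; apply: eq_bigr => b1 _.
rewrite exchange_big2; apply: eq_bigr => a2 _; apply: eq_bigr => b2 _.
rewrite !hcomulvE !big_distrl; apply: eq_bigr => a _ /=.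
by rewrite [in RHS]mulrAC big_distrr; apply: eq_bigr => j _ /=; ring.
Qed.

Lemma comul_pi_RplusH r y b c : Rplus H R r -> lform (comul_pi b c) (hmulv r y) = 0.
Proof.
have [_ _ _ Rcomul _] := HR; move=> [Rr r0]; have [s [sR rE]] := Rcomul r Rr.
have tens_eps : \sum_(p <- s) hcounitv H p.1 * hcounitv H p.2 = 0.
  rewrite -[RHS]r0 -(hcounitv_comul HH) rE sum_tensv; apply: eq_bigr => p _.
  by rewrite big_distrlr; apply: eq_bigr => x _; apply: eq_bigr => z _ /=; ring.
rewrite comul_pi_hmulv exchange_big2 big1 // => a2 _; rewrite big1 // => b2 _.
transitivity (hcomulv H y (a2, b2) *
  \sum_a1 \sum_b1 hcomulv H r (a1, b1) * (mul_pi a1 a2 b * mul_pi b1 b2 c)).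
  rewrite big_distrr; apply: eq_bigr => a1 _; rewrite big_distrr.
  by apply: eq_bigr => b1 _ /=; ring.
rewrite rE sum_tensv.
suff -> : \sum_(p <- s) \sum_x \sum_z p.1 x * p.2 z * (mul_pi x a2 b * mul_pi z b2 c) =
    (\sum_(p <- s) hcounitv H p.1 * hcounitv H p.2) * (pi a2 b * pi b2 c).
  by rewrite tens_eps mul0r mulr0.
rewrite big_distrl !big_seq; apply: eq_bigr => p /sR [R1 R2].
transitivity ((\sum_x p.1 x * mul_pi x a2 b) * (\sum_z p.2 z * mul_pi z b2 c)).
  by rewrite big_distrlr; apply: eq_bigr => x _; apply: eq_bigr => z _ /=; ring.
by rewrite !mul_pi_R // mulrACA.
Qed.

Definition comulQ a b c := lform (comul_pi b c) (sig a).

Lemma comul_pi_factor h b c : lform (comul_pi b c) h = \sum_j lapply h pi j * comulQ j b c.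
Proof. by apply: lform_factor_pi => r y; apply: comul_pi_RplusH. Qed.

Lemma lform_comul_pi h z w :
  lform (comul_pi z w) h = \sum_x \sum_y hcomulv H h (x, y) * (pi x z * pi y w).
Proof.
rewrite /lform /comul_pi.
under eq_bigr => l _ do rewrite big_distrr /=.
rewrite exchange_big; apply: eq_bigr => x _ /=.
under eq_bigr => l _ do rewrite big_distrr /=.
rewrite exchange_big; apply: eq_bigr => y _ /=.
by rewrite hcomulvE big_distrl; apply: eq_bigr => l _ /=; ring.
Qed.

Lemma comul_pi_hmulv_bvec h i b c : lform (comul_pi b c) (hmulv h (bvec k i)) =
  \sum_z \sum_w lform (comul_pi z w) h * act2 H rhoQ i z w b c.
Proof.
rewrite comul_pi_hmulv.
transitivity (\sum_a1 \sum_b1 \sum_a2 \sum_b2 \sum_z \sum_w hcomulv H h (a1, b1) *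
  (pi a1 z * pi b1 w) * (delta i a2 b2 * rhoQ a2 z b * rhoQ b2 w c)).
  apply: eq_bigr => a1 _; apply: eq_bigr => b1 _; apply: eq_bigr => a2 _.
  apply: eq_bigr => b2 _; rewrite [hcomulv _ (bvec _ _) _]hcomulvE sum_bvec !mul_pi_rho.
  rewrite big_distrlr big_distrr; apply: eq_bigr => z _ /=.
  by rewrite big_distrr; apply: eq_bigr => w _ /=; ring.
under eq_bigr => a1 _ do under eq_bigr => b1 _ do rewrite exchange_big2.
rewrite exchange_big2; apply: eq_bigr => z _; apply: eq_bigr => w _.
rewrite lform_comul_pi big_distrl; apply: eq_bigr => a1 _; rewrite big_distrl.
apply: eq_bigr => b1 _ /=; rewrite /act2 big_distrr; apply: eq_bigr => a2 _.
by rewrite big_distrr; apply: eq_bigr => b2 _ /=; ring.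
Qed.

Lemma comulQ_H i a b c :
  \sum_x rhoQ i a x * comulQ x b c = \sum_x \sum_y comulQ a x y * act2 H rhoQ i x y b c.
Proof.
transitivity (lform (comul_pi b c) (hmulv (sig a) (bvec k i))).
  by rewrite comul_pi_factor; apply: eq_bigr => x _; rewrite pi_sig_hmulv ract_bvec.
exact: comul_pi_hmulv_bvec.
Qed.

Lemma pi_counitQ y : \sum_c pi y c * counitQ c = eps y.
Proof.
have := hcounitv_factor (bvec k y); rewrite [hcounitv _ _]lform_bvec => ->.
by apply: eq_bigr => c _; rewrite lapply_bvec.
Qed.

Lemma comulQ_counit a b : \sum_c comulQ a b c * counitQ c = (a == b)%:R.
Proof.
transitivity (\sum_x \sum_y hcomulv H (sig a) (x, y) * (pi x b * eps y)).
  under eq_bigr => c _ do rewrite /comulQ lform_comul_pi big_distrl /=.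
  rewrite exchange_big; apply: eq_bigr => x _ /=.
  under eq_bigr => c _ do rewrite big_distrl /=.
  rewrite exchange_big; apply: eq_bigr => y _ /=.
  by rewrite -pi_counitQ !big_distrr; apply: eq_bigr => c _ /=; ring.
transitivity (\sum_x sig a x * pi x b); last by rewrite -lapplyE pi_sig ffunE.
apply: eq_bigr => x _; under eq_bigr => y _ do rewrite hcomulvE big_distrl /=.
rewrite exchange_big /= -[RHS](sum_kronr x (fun l => sig a l * pi x b)).
apply: eq_bigr => l _; rewrite -(comul_counitr HH) !big_distrr.
by apply: eq_bigr => y _ /=; ring.
Qed.

Local Notation tact := (tact H rhoQ).

Definition comulQ_map : lmap k (tbasis J 1) (tbasis J 2) :=
  fun f g => comulQ (f ord0) (tfst J 1 1 g ord0) (tsnd J 1 1 g ord0).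
Definition counitQ_map : lmap k (tbasis J 1) (tbasis J 0) := fun f _ => counitQ (f ord0).

Lemma comulQ_map_H_linear : H_linear (tact 1) (tact 2) comulQ_map.
Proof.
move=> i f g; rewrite /lcomp sum_tbasis1 sum_tbasis2.
under eq_bigr => x _ do rewrite tact1 // /comulQ_map ffunE.
rewrite comulQ_H; apply: eq_bigr => x _; apply: eq_bigr => y _.
by rewrite tact2_tcat // /comulQ_map tfst_cat tsnd_cat !ffunE.
Qed.

Lemma counitQ_map_H_linear : H_linear (tact 1) (tact 0) counitQ_map.
Proof.
move=> i f c; rewrite /lcomp sum_tbasis1 (sum_tbasis0 _ c).
under eq_bigr => x _ do rewrite tact1 // /counitQ_map ffunE.
by rewrite counitQ_H tact0 // mulrC.
Qed.

Lemma H_summand_Q1_Q2 : H_summand (tact 1) (tact 2).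
Proof.
exists comulQ_map, (ttens (@lid k (tbasis J 1)) counitQ_map); split.
- exact: comulQ_map_H_linear.
- exact: (ttens_H_linear HH (n := 1) counitQ_map_H_linear).
apply: lmap_ext => f f'; rewrite /lcomp sum_tbasis2.
have f'0 : tfst J 1 0 f' ord0 = f' ord0 by rewrite ffunE; congr (f' _); apply/val_inj.
transitivity (\sum_x (f' ord0 == x)%:R * \sum_y comulQ (f ord0) x y * counitQ y).
  apply: eq_bigr => x _; rewrite big_distrr; apply: eq_bigr => y _ /=.
  rewrite /comulQ_map /ttens /lid /counitQ_map tfst_cat tsnd_cat tb1_eq f'0 !ffunE eq_sym.
  by ring.
by rewrite sum_kronl comulQ_counit /lid -tb1_eq tb1K.
Qed.

Definition unit_pi : lmap k (tbasis J 0) (tbasis J 1) := fun _ g => lapply (honev H) pi (g ord0).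

Lemma unit_pi_R_linear : R_linear R (tact 0) (tact 1) unit_pi.
Proof.
move=> x Rx f g; rewrite /lcomp /ract /unit_pi (sum_tbasis0 _ f) sum_tbasis1.
under eq_bigr => i _ do rewrite tact0 //.
under [RHS]eq_bigr => z _ do under eq_bigr => i _ do rewrite tact1 // /tb1 ffunE.
transitivity (lapply (lapply (honev H) pi) (ract rhoQ x) (g ord0)).
  by rewrite -pi_hmulv hmul1v // -[in RHS](hmulv1 HH x) pi_hmulv_R.
by rewrite lapplyE; apply: eq_bigr => z _; rewrite /tb1 ffunE.
Qed.

Lemma unit_pi_counitQ : lmap_eq (lcomp unit_pi counitQ_map) (@lid k _).
Proof.
move=> f g; rewrite /lcomp /unit_pi /counitQ_map sum_tbasis1 /lid (tbasis0_eq f g) eqxx.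
under eq_bigr => j _ do rewrite /tb1 ffunE.
by rewrite -hcounitv_factor hcounitv1.
Qed.

Lemma counitQ_neq0 : exists j, counitQ j != 0.
Proof.
apply/existsP; apply: contraT => /existsPn counitQ0.
have := hcounitv1 HH; rewrite hcounitv_factor big1 => [/eqP|j _]; first by rewrite eq_sym oner_eq0.
by move/negPn/eqP: (counitQ0 j) => ->; rewrite mulr0.
Qed.

Lemma H_summand_k_Q : semisimple_ext H R -> H_summand (tact 0) (tact 1).
Proof.
move=> ssR; have [j0 counitQ_j0] := counitQ_neq0.
have [s [sH s_section]] : exists s, H_linear (tact 0) (tact 1) s /\
    lmap_eq (lcomp s counitQ_map) (@lid k _).
  apply: (semisimple_ext_section_line (b0 := tb1 j0) (c0 := [ffun => j0])) ssR _ => //.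
  - by move=> c; apply: tbasis0_eq.
  - exact/tact1_rmodule/rhoQ_rmodule.
  - exact: tact0_rmodule.
  - exact: counitQ_map_H_linear.
  - by rewrite /counitQ_map ffunE.
  - by exists unit_pi; split; [apply: unit_pi_R_linear | apply: unit_pi_counitQ].
by exists s, counitQ_map; split=> //; [apply: counitQ_map_H_linear | apply: lmap_ext].
Qed.

End QuotientModule.

Unset Implicit Arguments.
Local Close Scope ring_scope.

Theorem mainTheorem14 (k : fieldType) (I : finType) (H : hopf_struct k I)
  (R : {ffun I -> k} -> Prop) (J : finType) (pi : lmap k I J)
  (rhoQ : I -> lmap k J J) :
  is_hopf H -> hopf_subalg H R -> is_quotient_RplusH H R pi rhoQ ->
  (forall n : nat, bimod_summand H rhoQ n 1 2) /\
  (forall n m : nat, (1 <= n)%N -> (n.+1 <= m)%N -> bimod_summand H rhoQ n 1 m) /\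
  (semisimple_ext H R ->
     forall n m : nat, (n <= m)%N -> bimod_summand H rhoQ n 0 m).
Proof.
move=> HH HR HQ.
have [sig pi_sig] : exists sig : J -> {ffun I -> k}, forall j, lapply (sig j) pi = bvec k j.
  have [pi_onto _ _] := HQ; apply: fin_all_exists (fun j s => lapply s pi = bvec k j) _.
  by move=> j; apply: pi_onto.
have Q1_Qm m (m_ge1 : 1 <= m) : H_summand (tact H rhoQ 1) (tact H rhoQ m).
  exact (H_summand_tact_ladder HH (H_summand_Q1_Q2 HH HR HQ pi_sig) m_ge1).
split; first by move=> n; apply: (bimod_summand_ttens HH); apply: Q1_Qm.
split=> [n m n_ge1 n_lt_m | ssR n m _]; apply: (bimod_summand_ttens HH).
  exact/Q1_Qm/(leq_trans n_ge1 (ltnW n_lt_m)).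
exact (H_summand_tact_ladder HH (H_summand_k_Q HH HR HQ pi_sig ssR) (leq0n m)).
Qed.
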